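(* Let $k\ge1$ and $D_k=3k^2+3k+1$. Let $\Delta_1,\Delta_2$ be two copies of $T_{D_k}$ compatible with $P_k$ (each being either $c+V(T_{D_k})$ or $c-V(T_{D_k})$ with $c\in P_k$) which share exactly one side and have disjoint interiors. Then the number of points of $P_k$ that are at distance at most $k$ in $T_\infty$ from both $\Delta_1$ and $\Delta_2$ (i.e., counted in the local counts of both copies) is $2k+2$.
   Context: Let $\alpha_1=(1,0)$ and $\alpha_2=(-\tfrac12,\tfrac{\sqrt3}{2})$. The triangular lattice $T_\infty$ is the infinite graph with vertex set $\{a\alpha_1+b\alpha_2 : a,b\in\mathbb Z\}$, two vertices being adjacent iff their Euclidean distance is $1$; distances are graph distances, and the distance from a point to a vertex set is the minimum distance to its elements (zero for points of the set). For $d\ge0$, $V(T_d)=\{a\alpha_1+b\alpha_2 : 0\le b\le a\le d\}$ and $-V(T_d)$ is its point reflection. For $k\ge 1$, let $D_k=3k^2+3k+1$ and let $P_k$ (the pattern $P_{k+1,1}$) be the sublattice $\{x\,u+y\,v : x,y\in\mathbb Z\}$, where $u=(2k+1)\alpha_1+k\alpha_2$ and $v=(k+1)\alpha_1+(2k+1)\alpha_2$. *)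

From Stdlib Require Import ZArith Reals List.
Open Scope Z_scope.

(* A lattice point (a,b) stands for a*alpha1 + b*alpha2. *)
Definition pt := (Z * Z)%type.

(* Squared Euclidean norm of a*alpha1 + b*alpha2 is a^2 - a b + b^2
   (alpha1.alpha1 = alpha2.alpha2 = 1, alpha1.alpha2 = -1/2). *)
Definition sqnorm (a b : Z) : Z := a * a - a * b + b * b.

Definition adj (p q : pt) : Prop :=
  sqnorm (fst q - fst p) (snd q - snd p) = 1.

Fixpoint within (n : nat) (p q : pt) : Prop :=
  p = q \/ match n with
           | O => False
           | S m => exists r, adj p r /\ within m r q
           end.

Definition Dk (k : nat) : Z := let z := Z.of_nat k in 3 * z * z + 3 * z + 1.

(* The pattern P_k = { x u + y v } with u = (2k+1) alpha1 + k alpha2,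
   v = (k+1) alpha1 + (2k+1) alpha2. *)
Definition inP (k : nat) (p : pt) : Prop :=
  let z := Z.of_nat k in
  exists x y : Z,
    p = (x * (2 * z + 1) + y * (z + 1), x * z + y * (2 * z + 1)).

(* A copy of T_d: base point c and orientation; up = true means c + V(T_d),
   up = false means c - V(T_d). *)
Record tri := Tri { tc : pt ; tup : bool }.

Definition sgn (t : tri) : Z := if tup t then 1 else -1.

Definition inTri (d : Z) (t : tri) (p : pt) : Prop :=
  exists a b : Z, 0 <= b /\ b <= a /\ a <= d /\
    p = (fst (tc t) + sgn t * a, snd (tc t) + sgn t * b).

Definition compatible (k : nat) (t : tri) : Prop := inP k (tc t).

Definition corner (d : Z) (t : tri) (p : pt) : Prop :=
  p = tc t \/
  p = (fst (tc t) + sgn t * d, snd (tc t)) \/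
  p = (fst (tc t) + sgn t * d, snd (tc t) + sgn t * d).

Definition isSide (d : Z) (t : tri) (p q : pt) : Prop :=
  corner d t p /\ corner d t q /\ p <> q.

Definition share_exactly_one_side (d : Z) (t1 t2 : tri) : Prop :=
  (exists p q, isSide d t1 p q /\ isSide d t2 p q) /\
  (forall p q p' q',
      isSide d t1 p q -> isSide d t2 p q ->
      isSide d t1 p' q' -> isSide d t2 p' q' ->
      (p = p' /\ q = q') \/ (p = q' /\ q = p')).

(* Interior of the (real, closed) triangle t of side d: a real point with
   coordinates (x,y) w.r.t. (alpha1, alpha2); writing (a,b) = sgn*((x,y)-c),
   the closed triangle is 0 <= b <= a <= d and its interior 0 < b < a < d. *)
Definition inInterior (d : Z) (t : tri) (x y : R) : Prop :=
  let a := (IZR (sgn t) * (x - IZR (fst (tc t))))%R in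
  let b := (IZR (sgn t) * (y - IZR (snd (tc t))))%R in
  (0 < b /\ b < a /\ a < IZR d)%R.

Definition disjoint_interiors (d : Z) (t1 t2 : tri) : Prop :=
  forall x y : R, ~ (inInterior d t1 x y /\ inInterior d t2 x y).

Definition near (k : nat) (d : Z) (t : tri) (p : pt) : Prop :=
  exists v, inTri d t v /\ within k p v.

(* Graph distance in the triangular lattice is the hexagonal norm
   max(|a|, |b|, |a - b|) of the difference of coordinates, so the points at
   distance at most k from a copy of T_d form a hexagon cut out by six linear
   inequalities.  Two copies sharing exactly one side have opposite
   orientations, and the second one sits in one of three positions relative to
   the first.  Writing a pattern point as c + m u + n v, with c the base point
   of the upward copy, the two hexagons confine one linear form in (m, n) to
   two consecutive values and a second, independent one to k + 1 consecutive
   values; so the common points form a strip a + i s + j e with 0 <= i <= k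
   and j in {0, 1}, which has 2(k + 1) points. *)
From Stdlib Require Import ZArith Reals List Lia.
Open Scope Z_scope.

Definition vadd (p q : pt) : pt := (fst p + fst q, snd p + snd q).
Definition vsub (p q : pt) : pt := (fst p - fst q, snd p - snd q).

Definition lincomb (u v : pt) (x y : Z) : pt :=
  (x * fst u + y * fst v, x * snd u + y * snd v).

Definition det (u v : pt) : Z := fst u * snd v - snd u * fst v.

Lemma lincomb_injective u v x y x' y' : det u v <> 0 ->
  lincomb u v x y = lincomb u v x' y' -> x = x' /\ y = y'.
Proof.
  unfold lincomb, det; intros Hdet E; apply pair_equal_spec in E as [E1 E2].
  assert (Ex : (x - x') * (fst u * snd v - snd u * fst v) = 0).
  { transitivity ((x * fst u + y * fst v - (x' * fst u + y' * fst v)) * snd v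
                  - (x * snd u + y * snd v - (x' * snd u + y' * snd v)) * fst v); [ring |].
    rewrite E1, E2; ring. }
  assert (Ey : (y - y') * (fst u * snd v - snd u * fst v) = 0).
  { transitivity ((x * snd u + y * snd v - (x' * snd u + y' * snd v)) * fst u
                  - (x * fst u + y * fst v - (x' * fst u + y' * fst v)) * snd u); [ring |].
    rewrite E1, E2; ring. }
  apply Z.mul_eq_0 in Ex, Ey; lia.
Qed.

Lemma NoDup_list_prod {A B : Type} (l : list A) (l' : list B) :
  NoDup l -> NoDup l' -> NoDup (list_prod l l').
Proof.
  intros Hl Hl'; induction Hl as [| x l Hx Hl IH]; cbn; [constructor |].
  apply NoDup_app; [| exact IH |].
  - apply NoDup_map_NoDup_ForallPairs; [| exact Hl'].
    intros y y' _ _ E; injection E; auto.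
  - intros [x' y] Hin Hin'; apply in_map_iff in Hin as (y' & E & _); injection E as <- _.
    apply in_prod_iff in Hin' as [Hx' _]; contradiction.
Qed.

Ltac split_pairs :=
  unfold pt in *;
  repeat match goal with
  | H : context [@pair _ _ _ _ = @pair _ _ _ _] |- _ => rewrite pair_equal_spec in H
  | |- context [@pair _ _ _ _ = @pair _ _ _ _] => rewrite pair_equal_spec
  end.

Definition hexball (n a b : Z) : Prop :=
  -n <= a <= n /\ -n <= b <= n /\ -n <= a - b <= n.

Lemma sqnorm_eq1_hexball a b : sqnorm a b = 1 -> hexball 1 a b.
Proof. unfold sqnorm, hexball; intros H; repeat split; nia. Qed.

Lemma hexball_step n a b : ~ (a = 0 /\ b = 0) -> hexball (n + 1) a b ->
  exists e f, sqnorm e f = 1 /\ hexball n (a - e) (b - f).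
Proof.
  unfold hexball; intros Hab H.
  destruct (Z.lt_trichotomy a 0) as [Ha | [Ha | Ha]];
    destruct (Z.lt_trichotomy b 0) as [Hb | [Hb | Hb]].
  - exists (-1), (-1); split; [reflexivity | lia].
  - exists (-1), 0; split; [reflexivity | lia].
  - exists (-1), 0; split; [reflexivity | lia].
  - exists 0, (-1); split; [reflexivity | lia].
  - lia.
  - exists 0, 1; split; [reflexivity | lia].
  - exists 1, 0; split; [reflexivity | lia].
  - exists 1, 0; split; [reflexivity | lia].
  - exists 1, 1; split; [reflexivity | lia].
Qed.

Lemma within_hexball n p q :
  within n p q <-> hexball (Z.of_nat n) (fst q - fst p) (snd q - snd p).
Proof.
  revert p; induction n as [| n IH]; intros [p1 p2]; destruct q as [q1 q2];
    cbn [within fst snd].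
  - unfold hexball; split; [intros [E | []]; injection E; lia |].
    intros H; left; f_equal; lia.
  - rewrite Nat2Z.inj_succ; split.
    + intros [E | [[r1 r2] [Hr Hw]]]; [injection E; unfold hexball; lia |].
      apply IH in Hw; apply sqnorm_eq1_hexball in Hr; cbn in *; unfold hexball in *; lia.
    + intros H.
      assert (E : (p1 = q1 /\ p2 = q2) \/ ~ (q1 - p1 = 0 /\ q2 - p2 = 0)) by lia.
      destruct E as [[<- <-] | E]; [left; reflexivity | right].
      rewrite <- Z.add_1_r in H.
      destruct (hexball_step _ _ _ E H) as (e & f & Hu & Hs).
      exists (p1 + e, p2 + f); split.
      * unfold adj; cbn; rewrite <- Hu; f_equal; ring.
      * apply IH; cbn; unfold hexball in *; lia.
Qed.

(* Points at distance at most n from {(a, b) | 0 <= b <= a <= d}. *)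
Definition in_tri_nbhd (n d x y : Z) : Prop :=
  -n <= x <= d + n /\ -n <= y <= d + n /\ -n <= x - y <= d + n.

Lemma sgn_cases t : sgn t = 1 \/ sgn t = -1.
Proof. unfold sgn; destruct (tup t); auto. Qed.

Lemma near_iff k d t p : 0 <= d ->
  near k d t p <->
  in_tri_nbhd (Z.of_nat k) d (sgn t * (fst p - fst (tc t))) (sgn t * (snd p - snd (tc t))).
Proof.
  intros Hd; unfold near, inTri, in_tri_nbhd.
  destruct p as [p1 p2], (tc t) as [c1 c2]; cbn [fst snd].
  pose proof (sgn_cases t) as Hs; set (s := sgn t) in *; clearbody s.
  set (x := s * (p1 - c1)); set (y := s * (p2 - c2)).
  assert (Hp : p1 = c1 + s * x /\ p2 = c2 + s * y)
    by (subst x y; destruct Hs as [-> | ->]; lia).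
  clearbody x y; destruct Hp as [-> ->].
  split.
  - intros (v & (a & b & Hb & Hba & Ha & ->) & Hw).
    apply within_hexball in Hw; unfold hexball in Hw; cbn in Hw.
    destruct Hs as [-> | ->]; lia.
  - intros H.
    (* the nearest vertex clamps (x, y) into the triangle *)
    set (a := Z.min (Z.max x 0) d); set (b := Z.min (Z.max y 0) a).
    exists (c1 + s * a, c2 + s * b); split.
    + exists a, b; split; [| split; [| split]]; [subst a b; lia .. | reflexivity].
    + apply within_hexball; unfold hexball; cbn; subst a b.
      destruct Hs as [-> | ->]; lia.
Qed.

Definition common_nbhd (n d : Z) (o p : pt) : Prop :=
  in_tri_nbhd n d (fst p) (snd p) /\ in_tri_nbhd n d (fst o - fst p) (snd o - snd p).

Lemma near_up_down_iff k d tu td p : 0 <= d -> tup tu = true -> tup td = false ->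
  near k d tu p /\ near k d td p <->
  common_nbhd (Z.of_nat k) d (vsub (tc td) (tc tu)) (vsub p (tc tu)).
Proof.
  intros Hd Hu Hdown; rewrite !near_iff by exact Hd.
  unfold sgn, common_nbhd, in_tri_nbhd, vsub; rewrite Hu, Hdown; cbn [fst snd].
  split; intros H; lia.
Qed.

(* The down copy c' - V(T_d) shares a side with the up copy c + V(T_d) iff
   c' - c is one of these vectors (bottom, right and diagonal side). *)
Definition side_offset (d : Z) (o : pt) : Prop :=
  o = (d, 0) \/ o = (2 * d, d) \/ o = (d, d).

Lemma isSide_common d t1 t2 p q : 0 < d -> isSide d t1 p q -> isSide d t2 p q ->
  tc t1 = tc t2 /\ tup t1 = tup t2 \/
  tup t1 = true /\ tup t2 = false /\ side_offset d (vsub (tc t2) (tc t1)) \/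
  tup t1 = false /\ tup t2 = true /\ side_offset d (vsub (tc t1) (tc t2)).
Proof.
  destruct t1 as [[a1 b1] []], t2 as [[a2 b2] []], p as [p1 p2], q as [q1 q2];
    unfold isSide, corner, side_offset, sgn, vsub; cbn [tc tup fst snd];
    intros Hd [Hp1 [Hq1 Hpq]] [Hp2 [Hq2 _]]; split_pairs;
    [left; split; [| reflexivity] | right; left; do 2 (split; [reflexivity |])
    | right; right; do 2 (split; [reflexivity |]) | left; split; [| reflexivity]];
    destruct Hp1 as [Hp1 | [Hp1 | Hp1]], Hq1 as [Hq1 | [Hq1 | Hq1]];
    destruct Hp2 as [Hp2 | [Hp2 | Hp2]], Hq2 as [Hq2 | [Hq2 | Hq2]]; lia.
Qed.

Lemma not_share_one_side_self d t : 0 < d -> ~ share_exactly_one_side d t t.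
Proof.
  intros Hd [_ Huniq]; destruct t as [[c1 c2] u].
  set (t := Tri (c1, c2) u).
  assert (Hs : sgn t * d <> 0) by (destruct (sgn_cases t) as [-> | ->]; lia).
  assert (H1 : isSide d t (c1, c2) (c1 + sgn t * d, c2)).
  { split; [left | split; [right; left |]]; try reflexivity; split_pairs; lia. }
  assert (H2 : isSide d t (c1, c2) (c1 + sgn t * d, c2 + sgn t * d)).
  { split; [left | split; [right; right |]]; try reflexivity; split_pairs; lia. }
  destruct (Huniq _ _ _ _ H1 H1 H2 H2) as [[_ E] | [E _]]; split_pairs; lia.
Qed.

Lemma share_one_side_config d t1 t2 : 0 < d -> share_exactly_one_side d t1 t2 ->
  tup t1 = true /\ tup t2 = false /\ side_offset d (vsub (tc t2) (tc t1)) \/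
  tup t1 = false /\ tup t2 = true /\ side_offset d (vsub (tc t1) (tc t2)).
Proof.
  intros Hd Hshare; pose proof Hshare as [(p & q & H1 & H2) _].
  destruct (isSide_common d t1 t2 p q Hd H1 H2) as [[Ec Eu] | Hconfig];
    [exfalso | exact Hconfig].
  destruct t1, t2; cbn in Ec, Eu; subst.
  exact (not_share_one_side_self _ _ Hd Hshare).
Qed.

Lemma vadd_cancel_l c p q : vadd c p = vadd c q -> p = q.
Proof.
  destruct c, p, q; unfold vadd; cbn; intros E; split_pairs; f_equal; lia.
Qed.

Lemma vsub_vadd c p : vsub (vadd c p) c = p.
Proof. destruct c, p; unfold vsub, vadd; cbn; f_equal; ring. Qed.

Definition pattern_map (z : Z) (mn : pt) : pt :=
  lincomb (2 * z + 1, z) (z + 1, 2 * z + 1) (fst mn) (snd mn).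

Lemma pattern_map_injective z mn mn' : 0 <= z ->
  pattern_map z mn = pattern_map z mn' -> mn = mn'.
Proof.
  intros Hz E; apply lincomb_injective in E as [E1 E2];
    [apply injective_projections; assumption | unfold det; cbn [fst snd]; nia].
Qed.

Lemma inP_translate k c p : inP k c ->
  inP k p <-> exists mn, p = vadd c (pattern_map (Z.of_nat k) mn).
Proof.
  intros (x0 & y0 & ->); unfold inP, vadd, pattern_map, lincomb; cbn [fst snd]; split.
  - intros (x & y & ->); exists (x - x0, y - y0); cbn; f_equal; ring.
  - intros ([m n] & ->); exists (x0 + m), (y0 + n); cbn; f_equal; ring.
Qed.

Definition in_strip (z : Z) (a s e : pt) (mn : pt) : Prop :=
  exists i j, 0 <= i <= z /\ 0 <= j <= 1 /\ mn = vadd a (lincomb s e i j).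

Lemma pattern_strip_count k c a s e (Q : pt -> Prop) :
  inP k c -> det s e <> 0 ->
  (forall mn, Q (vadd c (pattern_map (Z.of_nat k) mn)) <-> in_strip (Z.of_nat k) a s e mn) ->
  exists L, NoDup L /\ (forall p, In p L <-> inP k p /\ Q p) /\ length L = (2 * k + 2)%nat.
Proof.
  intros Hc Hdet HQ.
  set (point := fun ij : nat * nat => vadd c (pattern_map (Z.of_nat k)
                  (vadd a (lincomb s e (Z.of_nat (fst ij)) (Z.of_nat (snd ij)))))).
  exists (map point (list_prod (seq 0 (k + 1)) (seq 0 2))); split; [| split].
  - apply NoDup_map_NoDup_ForallPairs; [| apply NoDup_list_prod; apply seq_NoDup].
    intros [i j] [i' j'] _ _ E.
    apply vadd_cancel_l, pattern_map_injective, vadd_cancel_l, lincomb_injective in E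
      as [Ei Ej]; [| exact Hdet | lia].
    cbn [fst snd] in Ei, Ej; f_equal; lia.
  - intros p; rewrite in_map_iff; split.
    + intros ([i j] & <- & Hij); apply in_prod_iff in Hij as [Hi Hj]; apply in_seq in Hi, Hj.
      split.
      * apply (inP_translate k c); [exact Hc |]; eexists; reflexivity.
      * apply HQ; exists (Z.of_nat i), (Z.of_nat j); repeat split; lia.
    + intros [Hp HQp]; apply (inP_translate k c) in Hp as (mn & ->); [| exact Hc].
      apply HQ in HQp as (i & j & Hi & Hj & ->).
      exists (Z.to_nat i, Z.to_nat j); split.
      * unfold point; cbn [fst snd]; rewrite !Z2Nat.id by lia; reflexivity.
      * apply in_prod_iff; split; apply in_seq; lia.
  - rewrite length_map, length_prod, !length_seq; lia.
Qed.

Section CommonNeighbourhood.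
Variable z : Z.
Hypothesis z_pos : 1 <= z.
Let d := 3 * z * z + 3 * z + 1.

Lemma in_strip_iff a s e m n : in_strip z a s e (m, n) <->
  exists i j, 0 <= i <= z /\ 0 <= j <= 1 /\
    m = fst a + i * fst s + j * fst e /\ n = snd a + i * snd s + j * snd e.
Proof.
  unfold in_strip, vadd, lincomb; split; intros (i & j & Hi & Hj & E);
    exists i, j; split_pairs; cbn [fst snd] in *; lia.
Qed.

Lemma common_nbhd_bottom m n :
  common_nbhd z d (d, 0) (pattern_map z (m, n)) <-> in_strip z (0, 0) (2, -1) (1, 0) (m, n).
Proof.
  rewrite in_strip_iff; unfold common_nbhd, in_tri_nbhd, pattern_map, lincomb, d;
    cbn [fst snd]; split.
  - intros H.
    assert (0 <= m + 2 * n <= 1) by nia.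
    assert (-z <= n <= 0) by nia.
    exists (-n), (m + 2 * n); lia.
  - intros (i & j & Hi & Hj & -> & ->).
    assert (j = 0 \/ j = 1) as [-> | ->] by lia; nia.
Qed.

Lemma common_nbhd_right m n :
  common_nbhd z d (2 * d, d) (pattern_map z (m, n)) <->
  in_strip z (z, z + 1) (1, -2) (1, -1) (m, n).
Proof.
  rewrite in_strip_iff; unfold common_nbhd, in_tri_nbhd, pattern_map, lincomb, d;
    cbn [fst snd]; split.
  - intros H.
    assert (3 * z + 1 <= 2 * m + n <= 3 * z + 2) by nia.
    assert (z + 1 <= m + n <= 2 * z + 1) by nia.
    exists (2 * z + 1 - m - n), (2 * m + n - 3 * z - 1); lia.
  - intros (i & j & Hi & Hj & -> & ->).
    assert (j = 0 \/ j = 1) as [-> | ->] by lia; nia.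
Qed.

Lemma common_nbhd_diagonal m n :
  common_nbhd z d (d, d) (pattern_map z (m, n)) <-> in_strip z (0, 0) (1, 1) (0, 1) (m, n).
Proof.
  rewrite in_strip_iff; unfold common_nbhd, in_tri_nbhd, pattern_map, lincomb, d;
    cbn [fst snd]; split.
  - intros H.
    assert (0 <= n - m <= 1) by nia.
    assert (0 <= m <= z) by nia.
    exists m, (n - m); lia.
  - intros (i & j & Hi & Hj & -> & ->).
    assert (j = 0 \/ j = 1) as [-> | ->] by lia; nia.
Qed.

Lemma common_nbhd_strip o : side_offset d o ->
  exists a s e, det s e <> 0 /\
    forall mn, common_nbhd z d o (pattern_map z mn) <-> in_strip z a s e mn.
Proof.
  intros [-> | [-> | ->]].
  - exists (0, 0), (2, -1), (1, 0); split; [discriminate | intros [m n]].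
    apply common_nbhd_bottom.
  - exists (z, z + 1), (1, -2), (1, -1); split; [discriminate | intros [m n]].
    apply common_nbhd_right.
  - exists (0, 0), (1, 1), (0, 1); split; [discriminate | intros [m n]].
    apply common_nbhd_diagonal.
Qed.

End CommonNeighbourhood.

Lemma up_down_common_count k tu td : (1 <= k)%nat ->
  compatible k tu -> tup tu = true -> tup td = false ->
  side_offset (Dk k) (vsub (tc td) (tc tu)) ->
  exists L, NoDup L /\
    (forall p, In p L <-> inP k p /\ near k (Dk k) tu p /\ near k (Dk k) td p) /\
    length L = (2 * k + 2)%nat.
Proof.
  intros Hk Hc Hu Hdown Hoff.
  destruct (common_nbhd_strip (Z.of_nat k) ltac:(lia) _ Hoff) as (a & s & e & Hdet & Hstrip).
  apply (pattern_strip_count k (tc tu) a s e); [exact Hc | exact Hdet |].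
  assert (Hd : 0 <= Dk k) by (unfold Dk; lia).
  intros mn; rewrite (near_up_down_iff _ _ _ _ _ Hd Hu Hdown), vsub_vadd.
  apply Hstrip.
Qed.

Theorem lemma2 (k : nat) (t1 t2 : tri) :
  (1 <= k)%nat ->
  compatible k t1 -> compatible k t2 ->
  share_exactly_one_side (Dk k) t1 t2 ->
  disjoint_interiors (Dk k) t1 t2 ->
  exists L : list pt,
    NoDup L /\
    (forall p, In p L <-> (inP k p /\ near k (Dk k) t1 p /\ near k (Dk k) t2 p)) /\
    length L = (2 * k + 2)%nat.
Proof.
  (* Triangles of opposite orientation sharing a side never overlap. *)
  intros Hk H1 H2 Hshare _.
  assert (Hd : 0 < Dk k) by (unfold Dk; nia).
  destruct (share_one_side_config _ _ _ Hd Hshare) as [(U1 & U2 & Hoff) | (U1 & U2 & Hoff)].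
  - exact (up_down_common_count k t1 t2 Hk H1 U1 U2 Hoff).
  - destruct (up_down_common_count k t2 t1 Hk H2 U2 U1 Hoff) as (L & HN & HL & Hlen).
    exists L; split; [exact HN | split; [| exact Hlen]].
    intros p; rewrite HL; tauto.
Qed.
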